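(* Let $C$ be a smooth and decomposable algebraic circuit over the probability semiring $(\mathbb R_{\ge0},+,\cdot,0,1)$ and variables $\mathbf H\cup\mathbf I^-$ (disjoint), representing $q=p_C$, and suppose $C$ is $\mathbf H$-deterministic, $\mathbf I^-$-deterministic and $(\mathbf H\cup\mathbf I^-)$-deterministic. Then the value $\max_{\mathbf h}\sum_{\mathbf i}\mathbb 1\big[q(\mathbf h,\mathbf i)\ne0\ \text{and}\ q(\mathbf h,\mathbf i)=\max_{\mathbf h'}q(\mathbf h',\mathbf i)\big]$ (the most frugal explanation value, for $q(\mathbf h,\mathbf i)=p(\mathbf h,\mathbf i,\mathbf e)$ with evidence $\mathbf e$ and the remaining variables marginalized) can be computed in $O(|C|)$ time.
   Context: An algebraic circuit over a semiring and variables $\mathbf V$ (finite domains) is a rooted DAG with input nodes (functions of a scope $\mathbf W\subseteq\mathbf V$), sum nodes and binary product nodes computing sums/products of children's functions on restricted assignments; internal scopes $\mathrm{vars}(\alpha)$ are unions of children's scopes; $p_\alpha$ is the function at $\alpha$; $|C|$ is the number of edges. Smooth: children of each sum node share a scope; decomposable: children of each product node have disjoint scopes. $\mathrm{supp}_{\mathbf X}(\alpha)=\{\mathbf x\in\mathrm{Assign}(\mathbf X\cap\mathrm{vars}(\alpha)):\exists\mathbf y\in\mathrm{Assign}(\mathrm{vars}(\alpha)\setminus\mathbf X),\ p_\alpha(\mathbf x,\mathbf y)\ne0\}$; $C$ is $\mathbf X$-deterministic if every sum node $\alpha=+_i\alpha_i$ has $\mathrm{vars}(\alpha)\cap\mathbf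 X=\emptyset$ or pairwise disjoint $\mathrm{supp}_{\mathbf X}(\alpha_i)$. Unit-cost arithmetic; operations on single input nodes take constant time. *)

From HB Require Import structures.
From mathcomp Require Import all_boot all_order all_algebra.
From mathcomp Require Import reals.
Set Implicit Arguments. Unset Strict Implicit. Unset Printing Implicit Defensive.
Import Order.TTheory GRing.Theory Num.Theory.
Local Open Scope ring_scope.

(* The variable set is V = Hv + Iv : the H-variables are the [inl _], the   *)
(* I^- variables are the [inr _] (so H and I^- are disjoint and cover V).   *)

Definition HAsg (Hv Iv : finType) (D : Hv + Iv -> finType) :=
  {dffun forall a : Hv, D (inl a)}.
Definition IAsg (Hv Iv : finType) (D : Hv + Iv -> finType) :=
  {dffun forall b : Iv, D (inr b)}.
Definition Asg (Hv Iv : finType) (D : Hv + Iv -> finType) :=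
  (HAsg D * IAsg D)%type.

Definition asg_val (Hv Iv : finType) (D : Hv + Iv -> finType)
  (x : Asg D) (v : Hv + Iv) : D v :=
  match v as v0 return D v0 with
  | inl a => x.1 a
  | inr b => x.2 b
  end.

Definition agree (Hv Iv : finType) (D : Hv + Iv -> finType)
  (X : {set Hv + Iv}) (x y : Asg D) : Prop :=
  forall v, v \in X -> asg_val x v = asg_val y v.

Definition Hset (Hv Iv : finType) : {set Hv + Iv} :=
  [set v : Hv + Iv | if v is inl _ then true else false].
Definition Iset (Hv Iv : finType) : {set Hv + Iv} := ~: Hset Hv Iv.

(* Algebraic circuits over (R_{>=0}, +, *, 0, 1), represented as a DAG in   *)
(* topological order: a list of nodes, children referenced by their index   *)
(* (strictly smaller than the index of the parent); the root is the last    *)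
(* node.  Sum nodes are n-ary, product nodes binary.  An input node carries *)
(* its scope W and its function (given on total assignments, required to    *)
(* depend only on the variables in W).                                      *)

Section Circuits.
Variables (Hv Iv : finType) (D : Hv + Iv -> finType) (R : realType).

Inductive node :=
  | Inp of {set Hv + Iv} & (Asg D -> R)
  | SumN of seq nat
  | ProdN of nat & nat.

Definition circuit := seq node.

Definition fdef : (Asg D -> R) * {set Hv + Iv} := (fun _ => 0, set0).

Definition node_sem (acc : seq ((Asg D -> R) * {set Hv + Iv})) (n : node) :=
  match n with
  | Inp W f => (f, W)
  | SumN cs => ((fun x => \sum_(j <- cs) (nth fdef acc j).1 x),
                \bigcup_(j <- cs) (nth fdef acc j).2)
  | ProdN a b => ((fun x => (nth fdef acc a).1 x * (nth fdef acc b).1 x),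
                  (nth fdef acc a).2 :|: (nth fdef acc b).2)
  end.

Definition sems (C : circuit) :=
  foldl (fun acc n => rcons acc (node_sem acc n)) [::] C.

Definition pfun (C : circuit) (k : nat) : Asg D -> R := (nth fdef (sems C) k).1.
Definition pvars (C : circuit) (k : nat) : {set Hv + Iv} := (nth fdef (sems C) k).2.

Definition croot (C : circuit) : nat := (size C).-1.

Definition children (n : node) : seq nat :=
  match n with
  | Inp _ _ => [::]
  | SumN cs => cs
  | ProdN a b => [:: a; b]
  end.

Definition ndef : node := SumN [::].

Definition wf_circuit (C : circuit) : Prop :=
  (0 < size C)%N /\
  (forall k, (k < size C)%N ->
     match nth ndef C k with
     | Inp W f => (forall x, 0 <= f x) /\ (forall x y, agree W x y -> f x = f y)
     | n => all (fun j => (j < k)%N) (children n)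
     end) /\
  (* rooted: every non-root node is a child of some later node, hence every
     node is reachable from the root *)
  (forall k, (k < croot C)%N -> exists2 k', (k' < size C)%N & k \in children (nth ndef C k')).

Definition edges (C : circuit) : nat := \sum_(n <- C) size (children n).

Definition smooth (C : circuit) : Prop :=
  forall k cs, (k < size C)%N -> nth ndef C k = SumN cs ->
    forall i j, i \in cs -> j \in cs -> pvars C i = pvars C j.

Definition decomposable (C : circuit) : Prop :=
  forall k a b, (k < size C)%N -> nth ndef C k = ProdN a b ->
    [disjoint pvars C a & pvars C b].

(* x's restriction to X ∩ vars(alpha) belongs to supp_X(alpha) *)
Definition in_supp (X : {set Hv + Iv}) (C : circuit) (k : nat) (x : Asg D) : Prop :=
  exists y, agree (X :&: pvars C k) x y /\ pfun C k y <> 0.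

Definition deterministic (X : {set Hv + Iv}) (C : circuit) : Prop :=
  forall k cs, (k < size C)%N -> nth ndef C k = SumN cs ->
    X :&: pvars C k = set0 \/
    (forall i j, (i < size cs)%N -> (j < size cs)%N -> i <> j ->
       ~ (exists x, in_supp X C (nth 0 cs i) x /\ in_supp X C (nth 0 cs j) x)).

Definition mfe_value (C : circuit) : nat :=
  let q := pfun C (croot C) in
  (\max_(h : HAsg D) \sum_(i : IAsg D)
     nat_of_bool ((q (h, i) != 0%R) &&
                  (q (h, i) == \big[Num.max/0%R]_(h' : HAsg D) q (h', i))%R))%N.

End Circuits.

(* Cost model: linear-time single bottom-up pass algorithms.                *)
(* Each node gets a state of k reals (k fixed, independent of the circuit). *)
(* - input node: state computed by an arbitrary operation on that single    *)
(*   input node (constant time by assumption), cost 1;                      *)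
(* - product node: state = fixed arithmetic expressions of its children's   *)
(*   states;                                                                *)
(* - sum node: fold over its children with fixed arithmetic expressions;    *)
(* - output: fixed arithmetic expression of the root state.                 *)
(* Arithmetic expressions use unit-cost +, -, *, constants and comparison;  *)
(* their cost is their size.                                                *)

Inductive expr (R : Type) (X : Type) :=
  | EVar of X
  | ECst of R
  | EAdd of expr R X & expr R X
  | EOpp of expr R X
  | EMul of expr R X & expr R X
  | EIfLe of expr R X & expr R X & expr R X & expr R X.

Arguments EVar {R X}. Arguments ECst {R X}.

Fixpoint eeval (R : realType) (X : Type) (env : X -> R) (e : expr R X) : R :=
  match e with
  | EVar x => env x
  | ECst r => r
  | EAdd a b => eeval env a + eeval env b
  | EOpp a => - eeval env a
  | EMul a b => eeval env a * eeval env b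
  | EIfLe a b c d => if eeval env a <= eeval env b then eeval env c else eeval env d
  end.

Fixpoint esize (R X : Type) (e : expr R X) : nat :=
  match e with
  | EVar _ | ECst _ => 1
  | EAdd a b | EMul a b => (esize a + esize b).+1
  | EOpp a => (esize a).+1
  | EIfLe a b c d => (esize a + esize b + esize c + esize d).+1
  end.

Record algorithm (R : realType) := Algorithm {
  nst : nat;
  a_inp : forall (Hv Iv : finType) (D : Hv + Iv -> finType),
            {set Hv + Iv} -> (Asg D -> R) -> 'I_nst -> R;
  a_prod : 'I_nst -> expr R ('I_nst + 'I_nst)%type;
  a_sinit : 'I_nst -> expr R void;
  a_sstep : 'I_nst -> expr R ('I_nst + 'I_nst)%type;   (* (accumulator, child) *)
  a_sfin : 'I_nst -> expr R 'I_nst;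
  a_out : expr R 'I_nst
}.

Section Run.
Variables (R : realType) (A : algorithm R).
Variables (Hv Iv : finType) (D : Hv + Iv -> finType).

Definition pair_env (s t : 'I_(nst A) -> R) (z : ('I_(nst A) + 'I_(nst A))%type) : R :=
  match z with inl u => s u | inr u => t u end.

Definition sdef : 'I_(nst A) -> R := fun _ => 0.

Definition node_state (acc : seq ('I_(nst A) -> R)) (n : node D R) : 'I_(nst A) -> R :=
  match n with
  | Inp W f => @a_inp R A Hv Iv D W f
  | ProdN a b => fun j => eeval (pair_env (nth sdef acc a) (nth sdef acc b)) (@a_prod R A j)
  | SumN cs =>
      let acc0 := fun j => eeval (fun v : void => match v with end) (@a_sinit R A j) in
      let fin := foldl (fun s c => fun j => eeval (pair_env s (nth sdef acc c)) (@a_sstep R A j))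
                       acc0 cs in
      fun j => eeval fin (@a_sfin R A j)
  end.

Definition states (C : circuit D R) :=
  foldl (fun acc n => rcons acc (node_state acc n)) [::] C.

Definition run (C : circuit D R) : R :=
  eeval (nth sdef (states C) (croot C)) (@a_out R A).

Definition tsize (X : Type) (E : 'I_(nst A) -> expr R X) : nat :=
  \sum_(j < nst A) esize (E j).

Definition node_cost (n : node D R) : nat :=
  match n with
  | Inp _ _ => 1
  | ProdN _ _ => tsize (@a_prod R A)
  | SumN cs => tsize (@a_sinit R A) + size cs * tsize (@a_sstep R A) + tsize (@a_sfin R A)
  end.

Definition cost (C : circuit D R) : nat :=
  \sum_(n <- C) node_cost n + esize (@a_out R A).

End Run.

From Pilot Require Import Defs.
From HB Require Import structures.
From mathcomp Require Import all_boot all_order all_algebra.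
From mathcomp Require Import reals.
From mathcomp Require Import lra zify.
Set Implicit Arguments. Unset Strict Implicit. Unset Printing Implicit Defensive.
Import Order.TTheory GRing.Theory Num.Theory.
Local Open Scope ring_scope.

(* At a product node the scopes are disjoint,
   a pair (h, i) is frugal for q1 q2 iff it is frugal for both factors, and counting over
   assignments spliced along the scope of q1 gives mfe (q1 q2) * |I| = mfe q1 * mfe q2.
   At a sum node all children have the scope of the node.  If that scope contains only
   I-variables, the children are constant in h and, by I-determinism, have disjoint
   supports, so the mfe is the sum of theirs.  Otherwise it is their maximum: without
   I-variables every mfe is |I| or 0, and with both kinds of variables determinism lets
   each row h and each column i meet the support of at most one child.  One pass carrying
   the mfe, 1/|I| and whether the scope meets H and I thus does constant work per edge. *)

Lemma bigmax_nat_bool (T : finType) (b : pred T) :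
  (\max_t (b t : nat))%N = [exists t, b t].
Proof.
case: existsP => [[t bt]|nb]; last first.
  by rewrite big1 // => t _; case: (boolP (b t)) => // bt; case: nb; exists t.
apply/eqP; rewrite eqn_leq; apply/andP; split; last by apply: leq_trans (leq_bigmax t); rewrite bt.
by apply/bigmax_leqP => t' _; apply: leq_b1.
Qed.

Lemma sum_eq_bigmax_nat (T : finType) (a : T -> nat) :
  (forall t t', t != t' -> a t = 0%N \/ a t' = 0%N) -> (\sum_t a t = \max_t a t)%N.
Proof.
move=> one; case: (pickP (fun t => a t != 0%N)) => [t at0|none]; last first.
  by rewrite !big1 // => t _; apply/eqP; rewrite -[_ == _]negbK none.
have others t' : t' != t -> a t' = 0%N.
  by move=> tt'; case: (one t t') => //; [rewrite eq_sym | move/eqP; rewrite (negbTE at0)].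
rewrite (bigD1 t) // [in RHS](bigD1 t) //= !big1 ?addn0 ?maxn0 // => t' /others ->.
Qed.

Lemma sum_neq0_nat (R : numDomainType) (T : finType) (r : T -> R) :
  (forall t, 0 <= r t) -> (forall t t', t != t' -> r t != 0 -> r t' = 0) ->
  ((\sum_t r t != 0) : nat) = (\sum_t (r t != 0%R : nat))%N.
Proof.
move=> r0 one; case: (pickP (fun t => r t != 0)) => [t rt|none]; last first.
  have rz t : r t = 0 by apply/eqP; rewrite -[_ == _]negbK none.
  by rewrite big1 // eqxx big1 // => t' _; rewrite rz eqxx.
have others t' : t' != t -> r t' = 0 by rewrite eq_sym => /one; apply.
rewrite (bigD1 t) // [in RHS](bigD1 t) //= !big1 ?addr0 ?addn0 ?rt // => t' /others ->.
  by rewrite eqxx.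
Qed.

Lemma setIU_neq0 (T : finType) (A B X : {set T}) :
  ((A :|: B) :&: X != set0) = (A :&: X != set0) || (B :&: X != set0).
Proof. by rewrite setIUl setU_eq0 negb_and. Qed.

Lemma bigcupI_neq0 (T : finType) (I : Type) (r : seq I) (F : I -> {set T}) X :
  ((\bigcup_(i <- r) F i) :&: X != set0) = has (fun i => F i :&: X != set0) r.
Proof.
by elim: r => [|i r IH]; rewrite ?big_nil ?set0I ?eqxx // big_cons setIU_neq0 IH.
Qed.

Lemma bigmax_seq_bool (I : Type) (r : seq I) (b : pred I) :
  (\max_(i <- r) (b i : nat))%N = has b r.
Proof.
by elim: r => [|i r IH]; rewrite ?big_nil ?big_cons ?IH //=; case: (b i); case: (has b r).
Qed.

Lemma mem_bigcup_seq (T : finType) (I : Type) (r : seq I) (F : I -> {set T}) x :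
  (x \in \bigcup_(i <- r) F i) = has (fun i => x \in F i) r.
Proof. by rewrite (big_morph _ (in_setU x) (in_set0 x)) big_has. Qed.

Lemma eq_mul_ubounds (R : realDomainType) (a b A B : R) :
  0 <= a <= A -> 0 <= b <= B ->
  ((a * b != 0) && (a * b == A * B)) = ((a != 0) && (a == A)) && ((b != 0) && (b == B)).
Proof.
move=> /andP[a0 aA] /andP[b0 bB].
have [->|an] := eqVneq a 0; first by rewrite mul0r eqxx.
have [->|bn] := eqVneq b 0; first by rewrite mulr0 eqxx andbF.
have ap : 0 < a by rewrite lt_def an a0.
have bp : 0 < b by rewrite lt_def bn b0.
rewrite mulf_neq0 //=; have [<-|aA'] := eqVneq a A.
  by rewrite (inj_eq (mulfI an)).
have aA2 : a < A by rewrite lt_def eq_sym aA' aA.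
have abAb : a * b < A * b by rewrite ltr_pM2r.
by rewrite lt_eqF // (lt_le_trans abAb) // ler_pM2l // (lt_trans ap aA2).
Qed.

Lemma foldl_proj (S T : Type) (step : S -> nat -> S) (pr : S -> T) (f : T -> nat -> T) :
  (forall s c, pr (step s c) = f (pr s) c) ->
  forall cs s, pr (foldl step s cs) = foldl f (pr s) cs.
Proof. by move=> prE; elim=> //= c cs IH s; rewrite IH prE. Qed.

Section Folds.
Variable R : realDomainType.
Variable g : nat -> R.

Lemma foldl_addr x cs : foldl (fun a c => a + g c) x cs = x + \sum_(c <- cs) g c.
Proof. by elim: cs x => [|c cs IH] x /=; rewrite ?big_nil ?addr0 // IH big_cons addrA. Qed.

Lemma foldl_max_natr (m : nat -> nat) cs x : {in cs, forall c, g c = (m c)%:R} ->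
  foldl (fun a c => Num.max a (g c)) x%:R cs = (maxn x (\max_(c <- cs) m c))%:R.
Proof.
elim: cs x => [|c cs IH] x gm /=; first by rewrite big_nil maxn0.
rewrite gm ?mem_head // -natr_max IH => [|c' c'cs]; last by apply: gm; rewrite inE c'cs orbT.
by rewrite big_cons maxnA.
Qed.

Lemma le_foldl_max x cs : x <= foldl (fun a c => Num.max a (g c)) x cs.
Proof. by elim: cs x => //= c cs IH x; apply: le_trans (IH _); rewrite le_max lexx. Qed.

Lemma foldl_max_ge x cs c : c \in cs -> g c <= foldl (fun a c => Num.max a (g c)) x cs.
Proof.
elim: cs x => //= c' cs IH x; rewrite inE => /orP[/eqP ->|ccs]; last exact: IH.
by apply: le_trans (le_foldl_max _ _); rewrite le_max lexx orbT.
Qed.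

Lemma foldl_max_le x cs v : x <= v -> {in cs, forall c, g c <= v} ->
  foldl (fun a c => Num.max a (g c)) x cs <= v.
Proof.
elim: cs x => //= c cs IH x xv gv; apply: IH => [|c' c'cs].
  by rewrite ge_max xv gv ?mem_head.
by apply: gv; rewrite inE c'cs orbT.
Qed.

End Folds.

Section Build.
Variables (T N : Type) (f : seq T -> N -> T) (d : T) (dn : N).

Definition build (ns : seq N) := foldl (fun acc n => rcons acc (f acc n)) [::] ns.

Lemma build_rcons ns n : build (rcons ns n) = rcons (build ns) (f (build ns) n).
Proof. by rewrite /build foldl_rcons. Qed.

Lemma size_build ns : size (build ns) = size ns.
Proof. by elim/last_ind: ns => // ns n IH; rewrite build_rcons !size_rcons IH. Qed.

Lemma nth_build ns k : (k < size ns)%N ->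
  nth d (build ns) k = f (take k (build ns)) (nth dn ns k).
Proof.
elim/last_ind: ns k => // ns n IH k.
rewrite size_rcons ltnS leq_eqVlt build_rcons => /orP [/eqP ->|lt].
  by rewrite !nth_rcons size_build ltnn eqxx -cats1 -(size_build ns) takel_cat // take_size.
rewrite nth_rcons size_build lt IH // nth_rcons lt -cats1 takel_cat //.
by rewrite size_build ltnW.
Qed.

End Build.

(** * Frugal explanations *)

Section Frugality.
Variables (Hv Iv : finType) (D : Hv + Iv -> finType) (R : realType).
Local Notation HA := (HAsg D).
Local Notation IA := (IAsg D).
Implicit Types (q : Asg D -> R) (W : {set Hv + Iv}) (h : HA) (i : IA).

Definition colmax q i : R := \big[Num.max/0]_(h' : HA) q (h', i).
Definition frugal q h i : bool := (q (h, i) != 0) && (q (h, i) == colmax q i).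
Definition mfe q : nat := (\max_(h : HA) \sum_(i : IA) frugal q h i)%N.

Definition nonneg q := forall x, 0 <= q x.
Definition depends_on q W := forall x y, agree W x y -> q x = q y.

Definition hagree W h h' := forall a, inl a \in W -> h a = h' a.
Definition iagree W i i' := forall b, inr b \in W -> i b = i' b.

Lemma hagree_refl W h : hagree W h h.
Proof. by []. Qed.

Lemma iagree_refl W i : iagree W i i.
Proof. by []. Qed.

Arguments hagree_refl : clear implicits.
Arguments iagree_refl : clear implicits.

Lemma depends_on_agree q W h h' i i' :
  depends_on q W -> hagree W h h' -> iagree W i i' -> q (h, i) = q (h', i').
Proof. by move=> dq hh ii; apply: dq => -[a|b] /=; [apply: hh | apply: ii]. Qed.

Lemma depends_on_sub q W W' : W \subset W' -> depends_on q W -> depends_on q W'.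
Proof. by move=> sub dq x y xy; apply: dq => v /(subsetP sub); apply: xy. Qed.

Lemma colmax_ge q h i : q (h, i) <= colmax q i.
Proof. exact: (le_bigmax 0 (fun h' => q (h', i)) h). Qed.

Lemma colmax_ge0 q i : 0 <= colmax q i.
Proof. exact: bigmax_ge_id. Qed.

Lemma colmax_attained q i : nonneg q -> HA -> exists h, colmax q i = q (h, i).
Proof.
move=> nq h0.
have [h _ e] := @eq_bigmax _ R HA 0 h0 predT (fun h' => q (h', i)) isT (fun _ _ => nq _).
by exists h; rewrite /colmax -e.
Qed.

Lemma colmax_agree q W i i' : depends_on q W -> iagree W i i' -> colmax q i = colmax q i'.
Proof. by move=> dq ii; apply: eq_bigr => h _; apply: depends_on_agree dq _ ii. Qed.

Lemma frugal_agree q W h h' i i' :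
  depends_on q W -> hagree W h h' -> iagree W i i' -> frugal q h i = frugal q h' i'.
Proof.
by move=> dq hh ii; rewrite /frugal (depends_on_agree dq hh ii) (colmax_agree dq ii).
Qed.

Lemma frugal_agreeH q W i : depends_on q W ->
  forall h h', hagree W h h' -> frugal q h i = frugal q h' i.
Proof. by move=> dq h h' hh; apply: frugal_agree dq hh (iagree_refl _ i). Qed.

Lemma frugal_agreeI q W h : depends_on q W ->
  forall i i', iagree W i i' -> frugal q h i = frugal q h i'.
Proof. by move=> dq i i'; apply: frugal_agree dq (hagree_refl _ h). Qed.

Lemma frugal_neq0 q h i : frugal q h i -> q (h, i) != 0.
Proof. by case/andP. Qed.

Lemma eq_mfe q q' : q =1 q' -> mfe q = mfe q'.
Proof.
move=> e; apply: eq_bigr => h _; apply: eq_bigr => i _.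
by rewrite /frugal /colmax e (eq_bigr (fun h' => q' (h', i))).
Qed.

Lemma mfe_le_card q : (mfe q <= #|IA|)%N.
Proof.
by apply/bigmax_leqP => h _; rewrite -sum1_card; apply: leq_sum => i _; apply: leq_b1.
Qed.

Definition hsplice W h1 h2 : HA := finfun (fun a => if inl a \in W then h1 a else h2 a).
Definition isplice W i1 i2 : IA := finfun (fun b => if inr b \in W then i1 b else i2 b).

Lemma hsplice_agreeL W h1 h2 : hagree W (hsplice W h1 h2) h1.
Proof. by move=> a Wa; rewrite ffunE Wa. Qed.

Lemma hsplice_agreeR W h1 h2 : hagree (~: W) (hsplice W h1 h2) h2.
Proof. by move=> a; rewrite inE ffunE => /negbTE ->. Qed.

Lemma isplice_agreeL W i1 i2 : iagree W (isplice W i1 i2) i1.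
Proof. by move=> b Wb; rewrite ffunE Wb. Qed.

Lemma isplice_agreeR W i1 i2 : iagree (~: W) (isplice W i1 i2) i2.
Proof. by move=> b; rewrite inE ffunE => /negbTE ->. Qed.

Arguments hsplice_agreeL : clear implicits.
Arguments hsplice_agreeR : clear implicits.
Arguments isplice_agreeL : clear implicits.
Arguments isplice_agreeR : clear implicits.

Lemma isplice_swapK W : involutive (fun p : IA * IA => (isplice W p.1 p.2, isplice W p.2 p.1)).
Proof.
by case=> i1 i2; congr pair; apply/ffunP => b; rewrite !ffunE; case: (inr b \in W).
Qed.

Lemma sum_andb_isplice W (f1 f2 : pred IA) :
  (forall i i', iagree W i i' -> f1 i = f1 i') ->
  (forall i i', iagree (~: W) i i' -> f2 i = f2 i') ->
  ((\sum_i (f1 i && f2 i)) * #|IA| = (\sum_i f1 i) * (\sum_i f2 i))%N.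
Proof.
move=> f1W f2W; rewrite -sum1_card big_distrl big_distrlr /=.
under eq_bigr do rewrite big_distrr /=.
rewrite !pair_big /= (reindex_inj (inv_inj (isplice_swapK W))) /=.
apply: eq_bigr => -[i1 i2] _ /=.
rewrite (f1W _ i1 (isplice_agreeL W i1 i2)) (f2W _ i2 (isplice_agreeR W i1 i2)) muln1.
by case: (f1 i1); case: (f2 i2).
Qed.

Lemma bigmax_mul_hsplice W (g1 g2 : HA -> nat) :
  (forall h h', hagree W h h' -> g1 h = g1 h') ->
  (forall h h', hagree (~: W) h h' -> g2 h = g2 h') ->
  (\max_h (g1 h * g2 h) = (\max_h g1 h) * (\max_h g2 h))%N.
Proof.
move=> g1W g2W; apply/eqP; rewrite eqn_leq; apply/andP; split.
  by apply/bigmax_leqP => h _; rewrite leq_mul // leq_bigmax.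
case: (pickP (@predT HA)) => [h0 _|HA0]; last by rewrite [X in (X * _)%N]big_pred0.
have HAn0 : (0 < #|HA|)%N by apply/card_gt0P; exists h0.
have [h1 ->] := bigop.eq_bigmax g1 HAn0; have [h2 ->] := bigop.eq_bigmax g2 HAn0.
apply: leq_trans (leq_bigmax (hsplice W h1 h2)).
by rewrite (g1W _ h1 (hsplice_agreeL W h1 h2)) (g2W _ h2 (hsplice_agreeR W h1 h2)).
Qed.

Section Product.
Variables (q1 q2 : Asg D -> R) (W1 W2 : {set Hv + Iv}).
Hypotheses (q1_ge0 : nonneg q1) (q2_ge0 : nonneg q2).
Hypotheses (q1W : depends_on q1 W1) (q2W : depends_on q2 W2).
Hypothesis W12 : [disjoint W1 & W2].

Let q2W' : depends_on q2 (~: W1).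
Proof. by apply: depends_on_sub q2W; rewrite -disjoints_subset disjoint_sym. Qed.

Lemma colmax_mul i : colmax (fun x => q1 x * q2 x) i = colmax q1 i * colmax q2 i.
Proof.
case: (pickP (@predT HA)) => [h0 _|HA0].
  apply/eqP; rewrite eq_le; apply/andP; split.
    apply: bigmax_le => [|h _]; first by rewrite mulr_ge0 // colmax_ge0.
    by rewrite ler_pM // colmax_ge.
  have [h1 ->] := colmax_attained i q1_ge0 h0; have [h2 ->] := colmax_attained i q2_ge0 h0.
  rewrite -(depends_on_agree q1W (hsplice_agreeL W1 h1 h2) (iagree_refl _ i)).
  rewrite -(depends_on_agree q2W' (hsplice_agreeR W1 h1 h2) (iagree_refl _ i)).
  exact: colmax_ge.
by rewrite /colmax !big_pred0 ?mulr0.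
Qed.

Lemma frugal_mul h i :
  frugal (fun x => q1 x * q2 x) h i = frugal q1 h i && frugal q2 h i.
Proof.
by rewrite /frugal colmax_mul eq_mul_ubounds // ?q1_ge0 ?q2_ge0 ?colmax_ge.
Qed.

Lemma mfe_mul : (mfe (fun x => (q1 x * q2 x)%R) * #|IA| = mfe q1 * mfe q2)%N.
Proof.
rewrite /mfe (big_morph (fun m => m * #|IA|)%N (fun m n => maxnMl m n #|IA|) (mul0n _)).
under eq_bigr => h _ do under eq_bigr => i _ do rewrite frugal_mul.
under eq_bigr => h _ do
  rewrite (sum_andb_isplice (frugal_agreeI h q1W) (frugal_agreeI h q2W')).
by apply: (bigmax_mul_hsplice (W := W1)) => h h' hh; apply: eq_bigr => i _;
  [rewrite (frugal_agreeH i q1W hh) | rewrite (frugal_agreeH i q2W' hh)].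
Qed.

End Product.

Section Independence.
Variable r : Asg D -> R.
Hypothesis r_ge0 : nonneg r.

Lemma existsb_frugal i : [exists h, frugal r h i] = [exists h, r (h, i) != 0].
Proof.
apply/existsP/existsP => [[h /frugal_neq0]|[h1 rh1]]; first by exists h.
have [h rh] := colmax_attained i r_ge0 h1.
exists h; rewrite /frugal -rh eqxx andbT gt_eqF //.
by apply: lt_le_trans (colmax_ge r h1 i); rewrite lt0r rh1 r_ge0.
Qed.

Lemma mfe_indepI : (forall h i i', r (h, i) = r (h, i')) ->
  mfe r = (#|IA| * [exists x, r x != 0%R])%N.
Proof.
move=> ri; case: (pickP (@predT IA)) => [i0 _|IA0]; last first.
  rewrite eq_card0 => [|i]; last by have := IA0 i.
  by rewrite /mfe big1 // => h _; rewrite big_pred0.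
have frugalE h i : frugal r h i = frugal r h i0.
  have mxE : colmax r i = colmax r i0 by apply: eq_bigr => h' _; rewrite (ri _ i i0).
  by rewrite /frugal mxE (ri _ i i0).
rewrite /mfe; under eq_bigr => h _ do
  rewrite (eq_bigr _ (fun i _ => congr1 _ (frugalE h i))) sum_nat_const.
rewrite -(big_morph _ (maxnMr #|IA|) (muln0 _)) bigmax_nat_bool existsb_frugal.
congr (_ * nat_of_bool _)%N; apply/existsP/existsP => [[h rh]|[[h i] rhi]].
  by exists (h, i0).
by exists h; rewrite -(ri h i i0).
Qed.

Lemma mfe_indepH (h0 : HA) : (forall h h' i, r (h, i) = r (h', i)) ->
  mfe r = (\sum_i (r (h0, i) != 0%R : nat))%N.
Proof.
move=> rh; have frugalE h i : frugal r h i = (r (h0, i) != 0).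
  have mxE : colmax r i = r (h, i).
    apply/eqP; rewrite eq_le colmax_ge andbT.
    by apply: bigmax_le => [|h' _]; [apply: r_ge0 | rewrite (rh h' h)].
  by rewrite /frugal mxE eqxx andbT (rh h h0).
have rowE h : (\sum_i frugal r h i = \sum_i (r (h0, i) != 0%R : nat))%N.
  by apply: eq_bigr => i _; rewrite frugalE.
apply/eqP; rewrite eqn_leq; apply/andP; split; first by apply/bigmax_leqP => h _; rewrite rowE.
by rewrite -(rowE h0) (leq_bigmax h0).
Qed.

End Independence.

Section Sums.
Variables (P : finType) (Q : P -> Asg D -> R).
Hypothesis Q_ge0 : forall p, nonneg (Q p).

Definition Isupp_disjoint := forall p p', p != p' ->
  forall h h' i, Q p (h, i) != 0 -> Q p' (h', i) = 0.
Definition Hsupp_disjoint := forall p p', p != p' ->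
  forall h i i', Q p (h, i) != 0 -> Q p' (h, i') = 0.

Let q x := \sum_p Q p x.

Lemma sum_ge0 : nonneg q.
Proof. by move=> x; apply: sumr_ge0 => p _; apply: Q_ge0. Qed.

Lemma frugal_sum : Isupp_disjoint ->
  forall h i, (frugal q h i : nat) = (\sum_p (frugal (Q p) h i : nat))%N.
Proof.
move=> Idisj h i; case: (pickP (fun p => Q p (h, i) != 0)) => [p Qp|none]; last first.
  have Qz p : Q p (h, i) = 0 by apply/eqP; rewrite -[_ == _]negbK none.
  by rewrite big1 => [|p _]; rewrite /frugal ?Qz /q ?big1 ?eqxx.
have others p' h' : p' != p -> Q p' (h', i) = 0.
  by rewrite eq_sym => pp'; apply: Idisj p p' pp' h h' i Qp.
have qE h' : q (h', i) = Q p (h', i).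
  by rewrite /q (bigD1 p) //= big1 ?addr0 // => p' /others ->.
rewrite (bigD1 p) //= big1 ?addn0 => [|p' /others Q'0]; last by rewrite /frugal Q'0 eqxx.
by rewrite /frugal qE /colmax (eq_bigr (fun h' => Q p (h', i))).
Qed.

Lemma mfe_sum_disjoint : Isupp_disjoint -> Hsupp_disjoint -> mfe q = (\max_p mfe (Q p))%N.
Proof.
move=> Idisj Hdisj; rewrite /mfe [RHS]exchange_big /=; apply: eq_bigr => h _.
rewrite (eq_bigr _ (fun i _ => frugal_sum Idisj h i)) exchange_big /=.
apply: sum_eq_bigmax_nat => p p' pp'.
case: (pickP (fun i => frugal (Q p) h i)) => [i Fi|F0]; last first.
  by left; rewrite big1 // => i _; rewrite F0.
right; rewrite big1 // => i' _; case Fi': (frugal (Q p') h i') => //.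
by move: (frugal_neq0 Fi'); rewrite (Hdisj p p' pp' h i i' (frugal_neq0 Fi)) eqxx.
Qed.

Lemma mfe_sum_indepI : (forall p h i i', Q p (h, i) = Q p (h, i')) ->
  mfe q = (\max_p mfe (Q p))%N.
Proof.
move=> Qi; rewrite mfe_indepI => [|x|h i i']; last 2 first.
- exact: sum_ge0.
- by apply: eq_bigr => p _; apply: Qi.
under eq_bigr => p _ do rewrite (mfe_indepI (Q_ge0 p) (Qi p)).
rewrite -(big_morph _ (maxnMr #|IA|) (muln0 _)) bigmax_nat_bool.
congr (_ * nat_of_bool _)%N; apply/existsP/existsP => [[x]|[p /existsP[x Qpx]]].
  rewrite psumr_neq0 => [/hasP[p _ /andP[_ Qpx]]|p _]; last exact: Q_ge0.
  by exists p; apply/existsP; exists x; rewrite gt_eqF.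
exists x; rewrite psumr_neq0 => [|p' _]; last exact: Q_ge0.
by apply/hasP; exists p; rewrite ?mem_index_enum // lt0r Qpx Q_ge0.
Qed.

Lemma mfe_sum_indepH : (forall p h h' i, Q p (h, i) = Q p (h', i)) -> Isupp_disjoint ->
  mfe q = (\sum_p mfe (Q p))%N.
Proof.
move=> Qh Idisj; case: (pickP (@predT HA)) => [h0 _|HA0]; last first.
  have mfe0 (r : Asg D -> R) : mfe r = 0%N by apply: big_pred0 => h; apply: HA0.
  by rewrite mfe0 big1 // => p _; rewrite mfe0.
rewrite (mfe_indepH sum_ge0 h0) => [|h h' i]; last by apply: eq_bigr => p _; apply: Qh.
under [RHS]eq_bigr => p _ do rewrite (mfe_indepH (Q_ge0 p) h0 (Qh p)).
rewrite exchange_big /=; apply: eq_bigr => i _; apply: sum_neq0_nat => [p|p p' pp' Qp].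
  exact: Q_ge0.
exact: (Idisj p p' pp' h0 h0 i Qp).
Qed.

End Sums.

Lemma agree_Iset (h h' : HAsg D) (i : IAsg D) : agree (Iset Hv Iv) (h, i) (h', i).
Proof. by case=> [a|b] //; rewrite !inE. Qed.

Lemma agree_Hset (h : HAsg D) (i i' : IAsg D) : agree (Hset Hv Iv) (h, i) (h, i').
Proof. by case=> [a|b] //; rewrite !inE. Qed.

Lemma depends_on_noI q W : depends_on q W -> W :&: Iset Hv Iv = set0 ->
  forall h i i', q (h, i) = q (h, i').
Proof.
move=> dq WI h i i'; apply: dq => -[a|b] //= Wb.
by have := in_set0 (inr b : Hv + Iv); rewrite -WI !inE Wb.
Qed.

Lemma depends_on_noH q W : depends_on q W -> W :&: Hset Hv Iv = set0 ->
  forall h h' i, q (h, i) = q (h', i).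
Proof.
move=> dq WH h h' i; apply: dq => -[a|b] //= Wa.
by have := in_set0 (inl a : Hv + Iv); rewrite -WH !inE Wa.
Qed.

End Frugality.

(** * Circuits *)

Section CircuitSemantics.
Variables (Hv Iv : finType) (D : Hv + Iv -> finType) (R : realType).
Variable C : circuit D R.
Hypothesis C_wf : wf_circuit C.

Local Notation nodeC k := (nth (ndef D R) C k).

Lemma children_lt k j : (k < size C)%N -> j \in children (nodeC k) -> (j < k)%N.
Proof.
move=> lt; have := C_wf.2.1 k lt.
by case: (nodeC k) => [W f|cs|a b] ch jc //; apply: (allP ch).
Qed.

Lemma node_semE k : (k < size C)%N -> match nodeC k with
  | Inp W f => pfun C k = f /\ pvars C k = W
  | SumN cs => (forall x, pfun C k x = \sum_(j <- cs) pfun C j x) /\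
               pvars C k = \bigcup_(j <- cs) pvars C j
  | ProdN a b => (forall x, pfun C k x = pfun C a x * pfun C b x) /\
                 pvars C k = pvars C a :|: pvars C b
  end.
Proof.
move=> lt; have ch := children_lt lt; rewrite /pfun /pvars (nth_build _ _ (ndef D R) lt).
case: (nodeC k) ch => [W f|cs|a b] //= ch.
  split; first by move=> x; apply: eq_big_seq => j jc; rewrite nth_take // ch.
  by apply: eq_big_seq => j jc; rewrite nth_take // ch.
by rewrite !nth_take // ch // !inE eqxx ?orbT.
Qed.

Lemma pfun_wf k : (k < size C)%N -> nonneg (pfun C k) /\ depends_on (pfun C k) (pvars C k).
Proof.
elim/ltn_ind: k => k IH lt; have ch := children_lt lt.
have IHc j : j \in children (nodeC k) -> nonneg (pfun C j) /\ depends_on (pfun C j) (pvars C j).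
  by move=> jc; apply: IH (ch _ jc) (ltn_trans (ch _ jc) lt).
have := node_semE lt; have := C_wf.2.1 k lt.
case: (nodeC k) IHc => [W f|cs|a b] /= IHc; first by move=> [f0 fW] [-> ->].
- move=> _ [pE vE]; split => [x|x y xy]; rewrite !pE.
    by rewrite big_seq sumr_ge0 // => j /IHc[].
  apply: eq_big_seq => j jc; apply: (IHc j jc).2 => v vj; apply: xy.
  by rewrite vE mem_bigcup_seq; apply/hasP; exists j.
- have [a0 aW] := IHc a (mem_head _ _).
  have [b0 bW] : nonneg (pfun C b) /\ depends_on (pfun C b) (pvars C b).
    by apply: IHc; rewrite !inE eqxx orbT.
  move=> _ [pE vE]; split => [x|x y xy]; rewrite !pE ?mulr_ge0 //.
  by rewrite (aW x y) ?(bW x y) // => v v_in; apply: xy; rewrite vE inE v_in ?orbT.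
Qed.

End CircuitSemantics.

Section StructuredCircuit.
Variables (Hv Iv : finType) (D : Hv + Iv -> finType) (R : realType).
Variable C : circuit D R.
Hypotheses (C_wf : wf_circuit C) (C_smooth : smooth C) (C_dec : decomposable C).
Hypotheses (C_detH : deterministic (Hset Hv Iv) C) (C_detI : deterministic (Iset Hv Iv) C).

Local Notation nodeC k := (nth (ndef D R) C k).

Definition hasH k := pvars C k :&: Hset Hv Iv != set0.
Definition hasI k := pvars C k :&: Iset Hv Iv != set0.

Lemma sum_child_pvars k cs j : (k < size C)%N -> nodeC k = SumN D R cs ->
  j \in cs -> pvars C j = pvars C k.
Proof.
move=> lt e jc; have := node_semE C_wf lt; rewrite e => -[_ ->].
apply/setP => v; rewrite mem_bigcup_seq; apply/idP/hasP => [vj|[j' j'c]]; first by exists j.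
by rewrite (C_smooth lt e jc j'c).
Qed.

Lemma det_supp_disjoint X k cs (p p' : 'I_(size cs)) x y :
  deterministic X C -> (k < size C)%N -> nodeC k = SumN D R cs ->
  X :&: pvars C k != set0 -> p != p' -> agree X x y ->
  pfun C (nth 0%N cs p) x != 0 -> pfun C (nth 0%N cs p') y = 0.
Proof.
move=> det lt e Xk pp' xy px; case: (det k cs lt e) => [/eqP|disj]; first by rewrite (negbTE Xk).
apply/eqP; apply: contraT => py; case: (disj p p' (ltn_ord p) (ltn_ord p')).
  by move/val_inj/eqP; rewrite (negbTE pp').
exists x; split; first by exists x; split; [|exact/eqP].
by exists y; split; [move=> v /setIP[vX _]; apply: xy | exact/eqP].
Qed.

Lemma mfe_prod_node k a b : (k < size C)%N -> nodeC k = ProdN D R a b ->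
  (mfe (pfun C k) * #|IAsg D| = mfe (pfun C a) * mfe (pfun C b))%N.
Proof.
move=> lt e; have := node_semE C_wf lt; rewrite e => -[pE _].
have ch j : j \in [:: a; b] -> (j < size C)%N.
  by move=> jc; apply: (ltn_trans _ lt); apply: (children_lt C_wf lt); rewrite e.
have [a0 aW] := pfun_wf C_wf (ch a (mem_head _ _)).
have [b0 bW] := pfun_wf C_wf (ch b (mem_last a [:: b])).
by rewrite (eq_mfe pE) (mfe_mul a0 b0 aW bW) // (C_dec lt e).
Qed.

Lemma mfe_sum_node k cs : (k < size C)%N -> nodeC k = SumN D R cs ->
  mfe (pfun C k) = if hasI k && ~~ hasH k then (\sum_(j <- cs) mfe (pfun C j))%N
                   else (\max_(j <- cs) mfe (pfun C j))%N.
Proof.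
move=> lt e; have := node_semE C_wf lt; rewrite e => -[pE _].
pose Q (p : 'I_(size cs)) := pfun C (nth 0%N cs p).
have Q_wf p : nonneg (Q p) /\ depends_on (Q p) (pvars C k).
  have pc : nth 0%N cs p \in cs by apply: mem_nth.
  rewrite /Q -(sum_child_pvars lt e pc); apply: (pfun_wf C_wf); apply: (ltn_trans _ lt).
  by apply: (children_lt C_wf lt); rewrite e.
have Q_ge0 p : nonneg (Q p) by have [] := Q_wf p.
have qE : pfun C k =1 (fun x => \sum_p Q p x).
  by move=> x; rewrite pE (big_nth 0%N) big_mkord.
rewrite (eq_mfe qE).
rewrite [in X in if _ then X else _](big_nth 0%N) [in X in if _ then _ else X](big_nth 0%N).
rewrite !big_mkord /hasI /hasH.
have Idisj : hasI k -> Isupp_disjoint Q.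
  move=> hI p p' pp' h h' i; apply: det_supp_disjoint C_detI lt e _ pp' (agree_Iset h h' i).
  by rewrite setIC.
have [hI|/negPn/eqP noI] /= := boolP (pvars C k :&: Iset Hv Iv != set0).
  have [hH|/negPn/eqP noH] /= := boolP (pvars C k :&: Hset Hv Iv != set0).
    apply: mfe_sum_disjoint => // [|p p' pp' h i i']; first exact: Idisj.
    apply: det_supp_disjoint C_detH lt e _ pp' (agree_Hset h i i').
    by rewrite setIC.
  by apply: mfe_sum_indepH => // [p|]; [apply: depends_on_noH (Q_wf p).2 noH | apply: Idisj].
by apply: mfe_sum_indepI => // p; apply: depends_on_noI (Q_wf p).2 noI.
Qed.

Lemma mfe_sum_node_neq0 k cs : (k < size C)%N -> nodeC k = SumN D R cs ->
  mfe (pfun C k) != 0%N -> has (fun c => mfe (pfun C c) != 0%N) cs.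
Proof.
move=> lt e; apply: contraLR => /hasPn mfe0; rewrite negbK (mfe_sum_node lt e).
have z c : c \in cs -> mfe (pfun C c) = 0%N by move/mfe0; rewrite negbK => /eqP.
rewrite big1_seq => [|c /andP[_ /z]//].
by rewrite big1_seq => [|c /andP[_ /z]//]; rewrite if_same.
Qed.

End StructuredCircuit.

(** * The algorithm *)

Section Algorithm.
Variable R : realType.

(* [s_invI] carries 1/|I| for the product rule mfe (q1 q2) = mfe q1 * mfe q2 / |I|. *)
Definition s_mfe : 'I_6 := @Ordinal 6 0 isT.
Definition s_invI : 'I_6 := @Ordinal 6 1 isT.
Definition s_hasH : 'I_6 := @Ordinal 6 2 isT.
Definition s_hasI : 'I_6 := @Ordinal 6 3 isT.
Definition s_sum : 'I_6 := @Ordinal 6 4 isT.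
Definition s_max : 'I_6 := @Ordinal 6 5 isT.

Definition EMax (X : Type) (a b : expr R X) : expr R X := EIfLe a b b a.
Definition EOr (X : Type) (x y : X) : expr R X :=
  EAdd (EAdd (EVar x) (EVar y)) (EOpp (EMul (EVar x) (EVar y))).

Definition mfe_inp (Hv Iv : finType) (D : Hv + Iv -> finType) (W : {set Hv + Iv})
    (f : Asg D -> R) (j : 'I_6) : R :=
  match nat_of_ord j with
  | 0 => (mfe f)%:R
  | 1 => #|IAsg D|%:R^-1
  | 2 => (W :&: Hset Hv Iv != set0)%:R
  | 3 => (W :&: Iset Hv Iv != set0)%:R
  | _ => 0
  end.

Definition mfe_prod (j : 'I_6) : expr R ('I_6 + 'I_6) :=
  match nat_of_ord j with
  | 0 => EMul (EMul (EVar (inl s_mfe)) (EVar (inr s_mfe))) (EVar (inl s_invI))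
  | 1 => EVar (inl s_invI)
  | 2 => EOr (inl s_hasH) (inr s_hasH)
  | 3 => EOr (inl s_hasI) (inr s_hasI)
  | _ => ECst 0
  end.

Definition mfe_sinit (j : 'I_6) : expr R void := ECst 0.

Definition mfe_sstep (j : 'I_6) : expr R ('I_6 + 'I_6) :=
  match nat_of_ord j with
  | 1 => EMax (EVar (inl s_invI)) (EVar (inr s_invI))
  | 2 => EMax (EVar (inl s_hasH)) (EVar (inr s_hasH))
  | 3 => EMax (EVar (inl s_hasI)) (EVar (inr s_hasI))
  | 4 => EAdd (EVar (inl s_sum)) (EVar (inr s_mfe))
  | 5 => EMax (EVar (inl s_max)) (EVar (inr s_mfe))
  | _ => ECst 0
  end.

Definition mfe_sfin (j : 'I_6) : expr R 'I_6 :=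
  match nat_of_ord j with
  | 0 => EIfLe (ECst 1) (EAdd (EVar s_hasI) (EOpp (EVar s_hasH))) (EVar s_sum) (EVar s_max)
  | 1 => EVar s_invI
  | 2 => EVar s_hasH
  | 3 => EVar s_hasI
  | _ => ECst 0
  end.

Definition mfe_alg : algorithm R :=
  @Algorithm R 6 mfe_inp mfe_prod mfe_sinit mfe_sstep mfe_sfin (EVar s_mfe).

Lemma eeval_EMax (X : Type) (env : X -> R) a b :
  eeval env (EMax a b) = Num.max (eeval env a) (eeval env b).
Proof. by rewrite maxEle. Qed.

Lemma natr_orb (b1 b2 : bool) : b1%:R + b2%:R - b1%:R * b2%:R = (b1 || b2)%:R :> R.
Proof. by case: b1; case: b2; rewrite ?mulr0 ?mul0r ?mulr1 ?subr0 ?addr0 ?add0r ?addrK. Qed.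

Lemma natr_sub_ge1 (b1 b2 : bool) : ((1 : R) <= b2%:R - b1%:R) = b2 && ~~ b1.
Proof.
case: b1; case: b2; rewrite /= ?subr0 ?subrr ?lexx ?ler10 //.
by apply/negbTE; rewrite -ltNge; lra.
Qed.

End Algorithm.

Section SumState.
Variables (R : realType) (Hv Iv : finType) (D : Hv + Iv -> finType).
Variables (acc : seq ('I_6 -> R)) (cs : seq nat).

Local Notation g c := (nth (@sdef R (mfe_alg R)) acc c).
Local Notation fold_max j := (foldl (fun a c => Num.max a (g c j)) 0 cs).
Local Notation s := (@node_state R (mfe_alg R) Hv Iv D acc (SumN D R cs)).

Lemma sum_state_slots :
  [/\ s s_mfe = if 1 <= s s_hasI - s s_hasH then foldl (fun a c => a + g c s_mfe) 0 cs
                else fold_max s_mfe,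
      s s_invI = fold_max s_invI, s s_hasH = fold_max s_hasH & s s_hasI = fold_max s_hasI].
Proof.
pose step (s : 'I_6 -> R) c j := eeval (@pair_env R (mfe_alg R) s (g c)) (mfe_sstep R j).
have slot j F : (forall s c, step s c j = F (s j) (g c)) ->
    foldl step (fun _ => 0) cs j = foldl (fun x c => F x (g c)) 0 cs.
  by move=> FE; apply: (foldl_proj (pr := fun s => s j)).
have maxslot j j' : mfe_sstep R j = EMax (EVar (inl j)) (EVar (inr j')) ->
    foldl step (fun _ => 0) cs j = foldl (fun a c => Num.max a (g c j')) 0 cs.
  move=> sE; apply: (slot _ (fun x t => Num.max x (t j'))) => s' c.
  by rewrite /step sE eeval_EMax.
rewrite /= (slot s_sum (fun x t => x + t s_mfe)) // (maxslot s_max s_mfe) //.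
by rewrite (maxslot s_invI s_invI) // (maxslot s_hasH s_hasH) // (maxslot s_hasI s_hasI).
Qed.

End SumState.

Section Correctness.
Variables (Hv Iv : finType) (D : Hv + Iv -> finType) (R : realType).
Variable C : circuit D R.
Hypotheses (C_wf : wf_circuit C) (C_smooth : smooth C) (C_dec : decomposable C).
Hypotheses (C_detH : deterministic (Hset Hv Iv) C) (C_detI : deterministic (Iset Hv Iv) C).

Local Notation nodeC k := (nth (ndef D R) C k).
Local Notation cardI := (#|IAsg D|%:R : R).
Local Notation state := ('I_6 -> R).
Local Notation nth_state acc k := (nth (@sdef R (mfe_alg R)) acc k).
Local Notation node_state acc n := (@node_state R (mfe_alg R) Hv Iv D acc n).

Definition state_inv k (s : state) : Prop :=
  [/\ s s_mfe = (mfe (pfun C k))%:R, 0 <= s s_invI <= cardI^-1,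
      mfe (pfun C k) != 0%N -> s s_invI = cardI^-1,
      s s_hasH = (hasH C k)%:R & s s_hasI = (hasI C k)%:R].

Lemma state_inv_input acc k W f : (k < size C)%N -> nodeC k = Inp W f ->
  state_inv k (node_state acc (Inp W f)).
Proof.
move=> lt e; have := node_semE C_wf lt; rewrite e => -[pE vE].
by split; rewrite //= /hasH /hasI ?pE ?vE // lexx invr_ge0 ler0n.
Qed.

Lemma state_inv_prod acc k a b : (k < size C)%N -> nodeC k = ProdN D R a b ->
  state_inv a (nth_state acc a) -> state_inv b (nth_state acc b) ->
  state_inv k (node_state acc (ProdN D R a b)).
Proof.
move=> lt e [a_mfe a_inv a_invE a_H a_I] [b_mfe _ _ b_H b_I].
have prodE := mfe_prod_node C_wf C_dec lt e.
have := node_semE C_wf lt; rewrite e => -[_ vE].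
have k_le := mfe_le_card (pfun C k).
have a_neq0 : mfe (pfun C k) != 0%N -> mfe (pfun C a) != 0%N.
  apply: contra_neq => a0; move/eqP: prodE; rewrite a0 mul0n muln_eq0.
  by case/orP => /eqP // I0; move: k_le; rewrite I0 leqn0 => /eqP.
split => /=; last 4 first.
- exact: a_inv.
- by move/a_neq0/a_invE.
- by rewrite a_H b_H natr_orb /hasH vE setIU_neq0.
- by rewrite a_I b_I natr_orb /hasI vE setIU_neq0.
have [a0|a0] := eqVneq (mfe (pfun C a)) 0%N.
  have k0 : mfe (pfun C k) = 0%N by apply/eqP/negPn/negP => /a_neq0; rewrite a0.
  by rewrite a_mfe b_mfe a0 k0 !mul0r.
have I_gt0 : (0 < #|IAsg D|)%N by apply: leq_trans (mfe_le_card (pfun C a)); rewrite lt0n.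
by rewrite a_mfe b_mfe (a_invE a0) -natrM -prodE natrM mulfK // pnatr_eq0 -lt0n.
Qed.

Lemma state_inv_sum acc k cs : (k < size C)%N -> nodeC k = SumN D R cs ->
  {in cs, forall c, state_inv c (nth_state acc c)} ->
  state_inv k (node_state acc (SumN D R cs)).
Proof.
move=> lt e IHc; have := node_semE C_wf lt; rewrite e => -[_ vE].
have [mfeE invE HE IE] := @sum_state_slots R Hv Iv D acc cs.
have flagE (fl : nat -> bool) (j : 'I_6) :
    {in cs, forall c, nth_state acc c j = (fl c)%:R} ->
    foldl (fun a c => Num.max a (nth_state acc c j)) 0 cs = (has fl cs)%:R.
  by move=> flE; rewrite -[0]/(0%:R) (foldl_max_natr 0 flE) max0n bigmax_seq_bool.
have H_E : node_state acc (SumN D R cs) s_hasH = (hasH C k)%:R.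
  by rewrite HE (flagE (hasH C)) => [|c /IHc[]]; rewrite // /hasH vE bigcupI_neq0.
have I_E : node_state acc (SumN D R cs) s_hasI = (hasI C k)%:R.
  by rewrite IE (flagE (hasI C)) => [|c /IHc[]]; rewrite // /hasI vE bigcupI_neq0.
have inv_le : {in cs, forall c, nth_state acc c s_invI <= cardI^-1} by move=> c /IHc[_ /andP[]].
split => //.
- have sumE : \sum_(c <- cs) nth_state acc c s_mfe = (\sum_(c <- cs) mfe (pfun C c))%:R.
    by rewrite natr_sum; apply: eq_big_seq => c /IHc[].
  rewrite mfeE H_E I_E natr_sub_ge1 (mfe_sum_node C_wf C_smooth C_detH C_detI lt e).
  rewrite foldl_addr add0r sumE -[0]/(0%:R) (foldl_max_natr (m := fun c => mfe (pfun C c)) 0).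
    by rewrite max0n; case: ifP.
  by move=> c /IHc[].
- rewrite invE le_foldl_max /=; apply: foldl_max_le => //.
  by rewrite invr_ge0 ler0n.
- move=> /(mfe_sum_node_neq0 C_wf C_smooth C_detH C_detI lt e) /hasP[c cs_c c0].
  rewrite invE; apply/eqP; rewrite eq_le foldl_max_le ?invr_ge0 ?ler0n //=.
  have [_ _ c_inv _ _] := IHc c cs_c.
  by rewrite -(c_inv c0) foldl_max_ge.
Qed.

Lemma state_invariant k : (k < size C)%N ->
  state_inv k (nth_state (states (mfe_alg R) C) k).
Proof.
elim/ltn_ind: k => k IH lt; rewrite (nth_build _ _ (ndef D R) lt).
have IHc c : c \in children (nodeC k) ->
    state_inv c (nth_state (take k (states (mfe_alg R) C)) c).
  move=> cc; have ck := children_lt C_wf lt cc.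
  by rewrite nth_take //; apply: IH ck (ltn_trans ck lt).
case e: (nodeC k) IHc => [W f|cs|a b] IHc.
- exact: state_inv_input lt e.
- by apply: state_inv_sum lt e _ => c; apply: IHc.
- by apply: state_inv_prod lt e _ _; apply: IHc; rewrite !inE eqxx ?orbT.
Qed.

End Correctness.

(** * Cost *)

Lemma size_le_edges (Hv Iv : finType) (D : Hv + Iv -> finType) (R : realType)
    (C : circuit D R) :
  wf_circuit C -> (size C <= (edges C).+1)%N.
Proof.
move=> [C_gt0 [_ rooted]]; rewrite -(prednK C_gt0) ltnS -/(croot C).
have -> : edges C = size (flatten (map (@children _ _ D R) C)).
  by rewrite size_flatten /shape -map_comp sumnE big_map.
rewrite -[X in (X <= _)%N](size_iota 0); apply: uniq_leq_size; first exact: iota_uniq.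
move=> k; rewrite mem_iota add0n => /rooted[k' lt' kk']; apply/flattenP.
exists (nth [::] (map (@children _ _ D R) C) k'); first by rewrite mem_nth ?size_map.
by rewrite (nth_map (ndef D R)).
Qed.

Definition mfe_alg_size (R : realType) : nat :=
  (Defs.tsize (@a_prod R (mfe_alg R)) + Defs.tsize (@a_sinit R (mfe_alg R))
   + Defs.tsize (@a_sstep R (mfe_alg R)) + Defs.tsize (@a_sfin R (mfe_alg R)) + 1)%N.

Lemma node_cost_le (R : realType) (Hv Iv : finType) (D : Hv + Iv -> finType) (n : node D R) :
  (node_cost (mfe_alg R) n <= mfe_alg_size R * (size (children n)).+1)%N.
Proof. by rewrite /mfe_alg_size; case: n => [W f|cs|a b] /=; nia. Qed.

Lemma cost_le (R : realType) (Hv Iv : finType) (D : Hv + Iv -> finType) (C : circuit D R) :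
  wf_circuit C -> (cost (mfe_alg R) C <= (2 * mfe_alg_size R + 1) * (edges C).+1)%N.
Proof.
move=> C_wf; have C_size := size_le_edges C_wf.
have nodes_le : (\sum_(n <- C) node_cost (mfe_alg R) n <= mfe_alg_size R * (edges C + size C))%N.
  rewrite /edges -(sum1_size C) -big_split big_distrr /=; apply: leq_sum => n _.
  by rewrite addn1 node_cost_le.
rewrite /cost /=; nia.
Qed.

Theorem theorem6 :
  forall R : realType,
  exists (A : algorithm R) (c0 : nat),
  forall (Hv Iv : finType) (D : Hv + Iv -> finType) (C : circuit D R),
    wf_circuit C ->
    smooth C ->
    decomposable C ->
    deterministic (Hset Hv Iv) C ->
    deterministic (Iset Hv Iv) C ->
    deterministic (Hset Hv Iv :|: Iset Hv Iv) C ->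
    pvars C (croot C) = [set: Hv + Iv] ->
    run A C = (mfe_value C)%:R /\ (cost A C <= c0 * (edges C).+1)%N.
Proof.
move=> R; exists (mfe_alg R), (2 * mfe_alg_size R + 1)%N.
move=> Hv Iv D C C_wf C_smooth C_dec C_detH C_detI _ _; split; last exact: cost_le.
have root_lt : (croot C < size C)%N by rewrite /croot prednK //; case: C_wf.
by have [] := state_invariant C_wf C_smooth C_dec C_detH C_detI root_lt.
Qed.
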